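(* Fix $(\sigma,i)$ with $1\le\sigma\le l$ and $1\le i\le d_\sigma$, and let $b_i^{(\sigma)}\colon C_i^{(\sigma)}\to\mathbb{A}^d$ be the chart described below. Then there exists a $k$-derivation $\psi$ of $\Gamma(C_i^{(\sigma)},\mathcal{O})=k[u_j^{(\pi)}]$ such that $b_i^{(\sigma),*}\partial_\mathbf{d}=u_i^{(\sigma)}\cdot\psi$ (as rational vector fields) and the coefficients of $\psi$ in the basis $\{\partial/\partial u_j^{(\pi)}\}$ generate the unit ideal. In particular the pullback $1$-foliation $b_i^{(\sigma),*}\mathscr{F}$, which is generated by $\psi$, is regular.
   Context: $k$ algebraically closed of characteristic $p>0$; $\mathbf{d}=(d_1,\dots,d_l)$ with $0\le d_\lambda\le p-1$; $\mathbb{A}^d$ has coordinates $x_j^{(\pi)}$ ($1\le\pi\le l$, $0\le j\le d_\pi$); $\partial_\mathbf{d}=\sum_\pi\sum_{j=1}^{d_\pi}x_j^{(\pi)}\partial/\partial x_{j-1}^{(\pi)}$ and $\mathscr{F}=\mathcal{O}_{\mathbb{A}^d}\cdot\partial_\mathbf{d}$. The chart $C_i^{(\sigma)}=\operatorname{Spec}k[u_j^{(\pi)}\mid 1\le\pi\le l,\ 0\le j\le d_\pi]$ (an affine chart of the weighted blow-up of $\mathbb{A}^d$ giving $x_j^{(\pi)}$ weight $j$) maps to $\mathbb{A}^d$ via: $x_0^{(\pi)}=u_0^{(\pi)}$ for all $\pi$; $x_i^{(\sigma)}=(u_i^{(\sigma)})^i$; $x_j^{(\pi)}=(u_i^{(\sigma)})^j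 u_j^{(\pi)}$ for all $(\pi,j)$ with $j\ge1$ and $(\pi,j)\ne(\sigma,i)$. The pullback $1$-foliation on $C_i^{(\sigma)}$ is the saturation of the subsheaf of the tangent sheaf generated by $b_i^{(\sigma),*}\partial_\mathbf{d}$ (which is birational). *)

From HB Require Import structures.
From mathcomp Require Import all_boot all_order all_algebra.
From mathcomp Require Import mpoly.
Set Implicit Arguments. Unset Strict Implicit. Unset Printing Implicit Defensive.
Import GRing.Theory.
Local Open Scope ring_scope.

(* Index set of the coordinates: pairs (pi, j) with pi : 'I_l (0-based
   version of 1 <= pi <= l) and 0 <= j <= d pi. *)
Definition Var (l : nat) (d : 'I_l -> nat) : finType :=
  @sigT 'I_l (fun pi => 'I_(d pi).+1).

Definition Pol (k : fieldType) (l : nat) (d : 'I_l -> nat) :=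
  {mpoly k[#|Var d|]}.

Definition U (k : fieldType) (l : nat) (d : 'I_l -> nat) (v : Var d)
  : Pol k d := 'X_(enum_rank v).

(* The variable u_i^(sigma) (meaningful for i <= d sigma). *)
Definition Usi (k : fieldType) (l : nat) (d : 'I_l -> nat) (sigma : 'I_l)
  (i : nat) : Pol k d :=
  U k (Tagged (fun pi => 'I_(d pi).+1) (inord i : 'I_(d sigma).+1)).

(* b^* x_v for the chart C_i^(sigma):
   x_0^(pi) = u_0^(pi);  x_i^(sigma) = (u_i^(sigma))^i;
   x_j^(pi) = (u_i^(sigma))^j u_j^(pi) otherwise. *)
Definition bstar (k : fieldType) (l : nat) (d : 'I_l -> nat) (sigma : 'I_l)
  (i : nat) (v : Var d) : Pol k d :=
  let j := val (tagged v) in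
  if j == 0%N then U k v
  else if (tag v == sigma) && (j == i) then Usi k d sigma i ^+ i
  else Usi k d sigma i ^+ j * U k v.

(* b^*(partial_d x_v): partial_d x_j^(pi) = x_(j+1)^(pi) if j < d pi,
   and 0 if j = d pi. *)
Definition bstar_dx (k : fieldType) (l : nat) (d : 'I_l -> nat)
  (sigma : 'I_l) (i : nat) (v : Var d) : Pol k d :=
  let j := val (tagged v) in
  if (j < d (tag v))%N then
    bstar k sigma i (Tagged (fun pi => 'I_(d pi).+1)
                            (inord j.+1 : 'I_(d (tag v)).+1))
  else 0.

Definition derivApp (k : fieldType) (l : nat) (d : 'I_l -> nat)
  (c : Var d -> Pol k d) (f : Pol k d) : Pol k d :=
  \sum_(v : Var d) c v * mderiv (enum_rank v) f.

From HB Require Import structures.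
From mathcomp Require Import all_boot all_order all_algebra.
From mathcomp Require Import mpoly.
From mathcomp Require Import ring.
Set Implicit Arguments. Unset Strict Implicit. Unset Printing Implicit Defensive.
Import GRing.Theory.
Local Open Scope ring_scope.

(* Write u := u_i^(sigma) and y_j^(pi) := [strict_coord], i.e. u_j^(pi) except
   y_i^(sigma) := 1, so that the chart reads x_j^(pi) = u^j y_j^(pi).  With
   w := y_(i+1)^(sigma) (0 if i = d_sigma), the equation for x_i^(sigma) forces
   psi(u) = u w / i, and then psi(y_j^(pi)) = y_(j+1)^(pi) - (j/i) w y_j^(pi)
   solves all the others; i is invertible because i <= d_sigma < p.
   Unimodularity: weighting psi(y_n^(sigma)), n < i, by prod_(n < q < i) (q/i) w
   makes the sum telescope to y_i^(sigma) - 0 * y_0^(sigma) = 1. *)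

Section Derivation.
Variables (k : fieldType) (l : nat) (d : 'I_l -> nat) (c : Var d -> Pol k d).
Implicit Types (f g : Pol k d).

Lemma derivAppU v : derivApp c (U k v) = c v.
Proof.
rewrite /derivApp /U (bigD1 v) //= big1 ?addr0 => [|w /negPf w_v].
  rewrite mderivX mnm1E eqxx mulr1n scale1r.
  have -> : (U_(enum_rank v) - U_(enum_rank v))%MM = 0%MM.
    by apply/mnmP=> j; rewrite mnmBE subnn mnmE.
  by rewrite mpolyX0 mulr1.
by rewrite mderivX mnm1E (inj_eq enum_rank_inj) eq_sym w_v scale0r mulr0.
Qed.

Lemma derivApp1 : derivApp c 1 = 0.
Proof.
by rewrite /derivApp big1 // => v _; rewrite -mpolyC1 mderivC mulr0.
Qed.

Lemma derivAppM f g : derivApp c (f * g) = f * derivApp c g + g * derivApp c f.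
Proof.
rewrite /derivApp !mulr_sumr -big_split /=; apply: eq_bigr => v _.
by rewrite mderivM; ring.
Qed.

(* Multiplied through by f, so that no f ^+ n.-1 appears. *)
Lemma derivAppX f n : f * derivApp c (f ^+ n) = n%:R * f ^+ n * derivApp c f.
Proof.
elim: n => [|n IHn]; first by rewrite expr0 derivApp1 mulr0 !mul0r.
by rewrite exprS derivAppM mulrDr IHn; ring.
Qed.

End Derivation.

Lemma pchar_natr_neq0 (R : nzRingType) (p n : nat) :
  p \in [pchar R] -> (0 < n < p)%N -> n%:R != 0 :> R.
Proof.
move=> charRp /andP[n_gt0 n_lt_p]; rewrite -(dvdn_pcharf charRp).
by apply/negP=> /(dvdn_leq n_gt0); rewrite leqNgt n_lt_p.
Qed.

Lemma big_sigT_fibre (R : Type) (idx : R) (op : Monoid.com_law idx)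
    (I : finType) (J : I -> finType) (i0 : I) (F : {i : I & J i} -> R) :
  (forall x, tag x != i0 -> F x = idx) ->
  \big[op/idx]_x F x = \big[op/idx]_(j : J i0) F (Tagged J j).
Proof.
move=> F0; transitivity (\big[op/idx]_(x | tag x == i0) F x).
  rewrite [RHS]big_mkcond; apply: eq_bigr => x _.
  by case: eqVneq => // /F0.
transitivity (\big[op/idx]_(i | i == i0) \big[op/idx]_(j : J i) F (Tagged J j)).
  by rewrite sig_big_dep; apply: eq_big => [[i j]|[i j] _] //=; rewrite andbT.
by rewrite big_pred1_eq.
Qed.

Section Chart.
Variables (k : fieldType) (l : nat) (d : 'I_l -> nat) (sigma : 'I_l) (i : nat).
Hypotheses (i_gt0 : (0 < i)%N) (i_le_d : (i <= d sigma)%N).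
Variable b : Pol k d.
Hypothesis i_mulr_b : i%:R * b = 1.

Local Notation T := (fun pi => 'I_(d pi).+1).
Local Notation u := (Usi k d sigma i).
Local Notation index v := (val (tagged v)).

Definition fibre_var (n : nat) : Var d := Tagged T (inord n : 'I_(d sigma).+1).

Definition succ_var (v : Var d) : Var d :=
  Tagged T (inord (index v).+1 : 'I_(d (tag v)).+1).

Definition strict_coord (v : Var d) : Pol k d :=
  if v == fibre_var i then 1 else U k v.

Definition next_coord (v : Var d) : Pol k d :=
  if (index v < d (tag v))%N then strict_coord (succ_var v) else 0.

Local Notation w := (next_coord (fibre_var i)).

Definition psi (v : Var d) : Pol k d :=
  if v == fibre_var i then u * w * b
  else next_coord v - (index v)%:R * b * w * U k v.

Lemma fibre_var_index n : (n <= d sigma)%N -> index (fibre_var n) = n.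
Proof. by move=> n_le_d; rewrite /= inordK. Qed.

Lemma eq_fibre_var n v : (n <= d sigma)%N ->
  (v == fibre_var n) = (tag v == sigma) && (index v == n).
Proof.
move=> n_le_d; apply/eqP/andP => [->|[/eqP sv /eqP vn]].
  by rewrite fibre_var_index.
case: v sv vn => pi t /= sv; subst pi => tn.
by congr (Tagged T _); apply: val_inj; rewrite /= inordK ?tn.
Qed.

Lemma bstarE v : bstar k sigma i v = u ^+ index v * strict_coord v.
Proof.
rewrite /bstar /strict_coord eq_fibre_var //.
have [j0 | j_neq0] := eqVneq (index v) 0%N.
  by rewrite j0 [(0 == i)%N]eq_sym (gtn_eqF i_gt0) andbF expr0 mul1r.
by case: ifP => [/andP[_ /eqP ->]|_]; rewrite ?mulr1.
Qed.

Lemma bstar_dxE v : bstar_dx k sigma i v = u ^+ (index v).+1 * next_coord v.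
Proof.
rewrite /bstar_dx /next_coord; case: ifP => [j_lt_d|]; last by rewrite mulr0.
by rewrite bstarE /= inordK.
Qed.

Lemma psi_pullback v : u * derivApp psi (bstar k sigma i v) = bstar_dx k sigma i v.
Proof.
have Du : derivApp psi u = u * w * b by rewrite derivAppU /psi eqxx.
rewrite bstarE bstar_dxE derivAppM mulrDr [u * (strict_coord v * _)]mulrCA derivAppX Du.
rewrite /strict_coord; have [->|v_ne] := eqVneq v (fibre_var i).
  by rewrite derivApp1 fibre_var_index // exprS; ring: i_mulr_b.
by rewrite derivAppU /psi (negPf v_ne) exprS; ring: i_mulr_b.
Qed.

Lemma succ_fibre_var n : (n < d sigma)%N -> succ_var (fibre_var n) = fibre_var n.+1.
Proof. by move=> n_lt_d; rewrite /succ_var fibre_var_index // ltnW. Qed.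

Lemma psi_fibre_var n : (n < i)%N ->
  psi (fibre_var n) =
  strict_coord (fibre_var n.+1) - n%:R * b * w * strict_coord (fibre_var n).
Proof.
move=> n_lt_i; have n_lt_d := leq_trans n_lt_i i_le_d.
have n_index : index (fibre_var n) = n by rewrite fibre_var_index // ltnW.
have n_ne_i : fibre_var n != fibre_var i.
  by rewrite eq_fibre_var // n_index (ltn_eqF n_lt_i) andbF.
by rewrite /psi /strict_coord (negPf n_ne_i) /next_coord n_index n_lt_d succ_fibre_var.
Qed.

Definition chain_weight (n : nat) : Pol k d := \prod_(n <= q < i) (q%:R * b * w).

Definition psi_cofactor (v : Var d) : Pol k d :=
  if (tag v == sigma) && (index v < i)%N then chain_weight (index v).+1 else 0.

Lemma chain_weight_psi n : (n < i)%N ->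
  chain_weight n.+1 * psi (fibre_var n) =
  chain_weight n.+1 * strict_coord (fibre_var n.+1)
  - chain_weight n * strict_coord (fibre_var n).
Proof.
by move=> n_lt_i; rewrite psi_fibre_var // /chain_weight (big_ltn n_lt_i); ring.
Qed.

Lemma psi_unimodular : \sum_(v : Var d) psi_cofactor v * psi v = 1.
Proof.
rewrite (@big_sigT_fibre _ _ _ _ _ sigma); last first.
  by move=> v /negPf v_notin; rewrite /psi_cofactor v_notin mul0r.
pose g n := chain_weight n.+1 * psi (fibre_var n).
transitivity (\sum_(t < (d sigma).+1 | (t < i)%N) g t).
  rewrite [RHS]big_mkcond; apply: eq_bigr => t _.
  by rewrite /psi_cofactor /= eqxx /g /fibre_var inord_val; case: (t < i)%N; rewrite ?mul0r.
rewrite -big_ord_widen ?leqW // -(big_mkord xpredT).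
rewrite (telescope_sumr_eq (fun n => chain_weight n * strict_coord (fibre_var n)) g) //.
  by rewrite /chain_weight big_geq // (big_ltn i_gt0) /strict_coord eqxx !mul0r subr0 mulr1.
by move=> n /andP[_ n_lt_i]; exact: chain_weight_psi.
Qed.

End Chart.

Theorem mainTheorem10 (k : closedFieldType) (p : nat) (hp : p \in [pchar k])
  (l : nat) (d : 'I_l -> nat) (hd : forall pi, (d pi <= p.-1)%N)
  (sigma : 'I_l) (i : nat) (hi1 : (1 <= i)%N) (hi2 : (i <= d sigma)%N) :
  exists c : Var d -> Pol k d,
    (forall v : Var d,
        Usi k d sigma i * derivApp c (bstar k sigma i v) = bstar_dx k sigma i v)
    /\ exists a : Var d -> Pol k d, \sum_(v : Var d) a v * c v = 1.
Proof.
have i_lt_p : (i < p)%N.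
  by rewrite -(prednK (prime_gt0 (pcharf_prime hp))) ltnS (leq_trans hi2).
have i_neq0 : (i%:R : k) != 0 by rewrite (pchar_natr_neq0 hp) // hi1.
pose b : Pol k d := (i%:R^-1)%:MP.
have i_mulr_b : i%:R * b = 1.
  by rewrite /b -(rmorph_nat (@mpolyC _ k)) -rmorphM mulfV // rmorph1.
exists (psi sigma i b); split; first exact: psi_pullback.
by exists (psi_cofactor sigma i b); exact: psi_unimodular.
Qed.
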